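(* Let $N\ge 2$ and let $T^{H,F}_N$ be the period of the F-type Hadamard walk on the cycle $C_N$. Then $$T^{H,F}_N=\begin{cases}8,& N=2,\\ 8,& N=4,\\ 24,& N=8,\\ \infty,&\text{otherwise.}\end{cases}$$
   Context: Let $N\ge 2$ and identify the vertex set of the cycle graph $C_N$ with $\mathbb{Z}/N\mathbb{Z}$. The state space is $\mathcal H=\mathbb{C}^{N}\otimes\mathbb{C}^2$ with orthonormal basis $\{|x\rangle\otimes|\leftarrow\rangle,\ |x\rangle\otimes|\rightarrow\rangle : x\in\mathbb{Z}/N\mathbb{Z}\}$. The shift operator $S$ is the unitary with $S(|x\rangle\otimes|\leftarrow\rangle)=|x-1\rangle\otimes|\leftarrow\rangle$ and $S(|x\rangle\otimes|\rightarrow\rangle)=|x+1\rangle\otimes|\rightarrow\rangle$ (indices mod $N$). For a unitary $2\times2$ local coin $A$ (in the basis $(|\leftarrow\rangle,|\rightarrow\rangle)$) the time-evolution operator is $U=S\,(I_N\otimes A)$. The F-type Hadamard walk uses $A^{H,F}=\frac{1}{\sqrt2}\begin{bmatrix}1&-1\\1&1\end{bmatrix}$, with time-evolution operator $U^{H,F}_N$. The period of a walk with time-evolution operator $U$ is $\inf\{n\ge1: U^n=I\}$, defined to be $\infty$ if no such $n$ exists. *)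

From mathcomp Require Import all_boot all_order all_algebra all_field.
Set Implicit Arguments. Unset Strict Implicit. Unset Printing Implicit Defensive.
Import GRing.Theory Num.Theory.
Local Open Scope ring_scope.

(* Vertices of C_N: 'I_N (= Z/NZ, N >= 2), with cyclic successor ordS and
   predecessor ord_pred.  Coin states: false = |<-|, true = |->|.
   A vector of H = C^N (x) C^2 is a function 'I_N * bool -> algC
   (coefficients in the standard orthonormal basis |x> (x) |c>). *)
Definition state (N : nat) := {ffun 'I_N * bool -> algC}.

(* I_N (x) A^{H,F}, A^{H,F} = 1/sqrt2 [[1,-1],[1,1]] in basis (|<-|, |->|). *)
Definition coinHF (N : nat) (psi : state N) : state N :=
  [ffun p : 'I_N * bool =>
     if p.2 then (psi (p.1, false) + psi (p.1, true)) / sqrtC 2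
     else (psi (p.1, false) - psi (p.1, true)) / sqrtC 2].

(* Shift S: |x>|<-| |-> |x-1>|<-|,  |x>|->| |-> |x+1>|->|.
   Hence (S psi)(y,<-) = psi(y+1,<-) and (S psi)(y,->) = psi(y-1,->). *)
Definition shift (N : nat) (psi : state N) : state N :=
  [ffun p : 'I_N * bool =>
     if p.2 then psi (ord_pred p.1, true) else psi (ordS p.1, false)].

Definition UHF (N : nat) (psi : state N) : state N := shift (coinHF psi).

Definition pow_is_id (N n : nat) : Prop := forall psi : state N, iter n (@UHF N) psi = psi.

(* The period inf{n >= 1 : U^n = I}: Some T for a finite period T, None for infinity. *)
Definition period_is (N : nat) (T : option nat) : Prop :=
  match T with
  | Some t => (0 < t)%N /\ pow_is_id N t /\ (forall m, (0 < m < t)%N -> ~ pow_is_id N m)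
  | None => forall n, (0 < n)%N -> ~ pow_is_id N n
  end.

From mathcomp Require Import all_boot all_order all_algebra all_field.
From mathcomp Require Import ring.
Set Implicit Arguments. Unset Strict Implicit. Unset Printing Implicit Defensive.
Import GRing.Theory Num.Theory.
Local Open Scope ring_scope.

(* For N = 2, 4, 8 the operator [sqrt 2 U] has integer entries, and a finite
   computation on integer coefficient vectors shows [(sqrt 2 U)^T = 2^(T/2) I]
   for T = 8, 8, 24 respectively.
   Conversely, for each N-th root of unity w the plane waves [w^x v] span a
   U-invariant plane on which U has trace [(w + w^-1) / sqrt 2] and determinant 1.
   If U^m = I, both eigenvalues on that plane are roots of unity, so their sum, and
   hence [(w + w^-1)^2 / 2], is an algebraic integer.  This fails as soon as N has
   an odd divisor d >= 3 (the values at the square roots of the d-th roots of unity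
   multiply to 2^(2 - d)) or 16 divides N (the values at a primitive 16th root z
   and at z^3 multiply to 1/2); so the period is finite only when N divides 8.
   The same eigenvalues bound the period from below: w = 1 yields a primitive 8th
   root of unity, and for N = 8, w = -zeta8 yields a primitive cube root of unity. *)

Definition map_pair (A B : Type) (f : A -> B) (st : seq A * seq A) : seq B * seq B :=
  (map f st.1, map f st.2).

(* One step of the walk on the amplitude lists (left chirality, right chirality),
   indexed by vertex; [add]/[sub] are the two rows of the coin. *)
Definition walk_step (A : Type) (N : nat) (add sub : A -> A -> A) (d : A)
    (st : seq A * seq A) : seq A * seq A :=
  (mkseq (fun y => sub (nth d st.1 (y.+1 %% N)) (nth d st.2 (y.+1 %% N))) N,
   mkseq (fun y => add (nth d st.1 ((y + N).-1 %% N)) (nth d st.2 ((y + N).-1 %% N))) N).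

Lemma nth_map_default (A B : Type) (f : A -> B) d s i :
  nth (f d) (map f s) i = f (nth d s i).
Proof. by elim: s i => [|x s IH] [|i] //=. Qed.

Lemma map_pair_mkseq (A B : Type) (f : A -> B) g h N :
  map_pair f (mkseq g N, mkseq h N) = (mkseq (f \o g) N, mkseq (f \o h) N).
Proof. by rewrite /map_pair /mkseq /= -!map_comp. Qed.

Lemma walk_step_map (A B : Type) N (f g : A -> B) add sub d add' sub' d' :
    (forall a b, g (add a b) = add' (f a) (f b)) ->
    (forall a b, g (sub a b) = sub' (f a) (f b)) -> f d = d' ->
  forall st, map_pair g (walk_step N add sub d st) = walk_step N add' sub' d' (map_pair f st).
Proof.
move=> gadd gsub <- st; rewrite /map_pair /walk_step /mkseq /= -!map_comp.
by congr pair; apply: eq_map => y /=; rewrite !nth_map_default.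
Qed.

Definition amplitudes n (psi : state n.+1) : seq algC * seq algC :=
  (mkseq (fun x => psi (inord x, false)) n.+1, mkseq (fun x => psi (inord x, true)) n.+1).

Lemma amplitudes_inj n : injective (@amplitudes n).
Proof.
move=> phi psi eq_amp; apply/ffunP => -[x []].
- by move/(congr1 (fun st => nth 0 st.2 x)): eq_amp; rewrite /= !nth_mkseq // inord_val.
- by move/(congr1 (fun st => nth 0 st.1 x)): eq_amp; rewrite /= !nth_mkseq // inord_val.
Qed.

Definition hadamard_step N :=
  walk_step N (fun a b : algC => (a + b) / sqrtC 2) (fun a b => (a - b) / sqrtC 2) 0.

Lemma amplitudes_UHF n (psi : state n.+1) :
  amplitudes (UHF psi) = hadamard_step n.+1 (amplitudes psi).
Proof.
have ordS_inord (y : nat) : (y < n.+1)%N -> ordS (inord y : 'I_n.+1) = inord (y.+1 %% n.+1).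
  by move=> lt_y; apply/val_inj; rewrite /= !inordK // ltn_pmod.
have ord_pred_inord (y : nat) : (y < n.+1)%N ->
    ord_pred (inord y : 'I_n.+1) = inord ((y + n.+1).-1 %% n.+1).
  by move=> lt_y; apply/val_inj; rewrite /= !inordK // ltn_pmod.
rewrite /amplitudes /hadamard_step /walk_step /=.
congr pair; apply: (@eq_from_nth _ 0); rewrite ?size_mkseq // => y lt_y;
  rewrite !nth_mkseq ?ltn_pmod // /UHF /shift /coinHF !ffunE /=.
- by rewrite ordS_inord.
- by rewrite ord_pred_inord.
Qed.

(* A coefficient vector [c] of length [2N] stands for [\sum_j c_j a_j], where [a]
   lists the left amplitudes of all vertices followed by the right ones. *)
Definition coef_add (K : nat) (c e : seq int) := mkseq (fun j => nth 0 c j + nth 0 e j) K.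
Definition coef_sub (K : nat) (c e : seq int) := mkseq (fun j => nth 0 c j - nth 0 e j) K.

(* [sqrt 2 * U], acting on states whose amplitudes are coefficient vectors. *)
Definition coef_step N := walk_step N (coef_add (N + N)) (coef_sub (N + N)) [::].

Definition coef_scalar N (c : int) : seq (seq int) * seq (seq int) :=
  (mkseq (fun x => mkseq (fun j => (j == x)%:R * c) (N + N)) N,
   mkseq (fun x => mkseq (fun j => (j == N + x)%:R * c) (N + N)) N).

Definition coef_power_scalar N m c :=
  iter m (coef_step N) (coef_scalar N 1) == coef_scalar N c.

Lemma sqrtC2_neq0 : sqrtC 2 != 0 :> algC.
Proof. by rewrite sqrtC_eq0 pnatr_eq0. Qed.

Lemma sqrtC2_expr_double k : sqrtC 2 ^+ k.*2 = 2 ^+ k :> algC.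
Proof. by rewrite -muln2 mulnC exprM sqrtCK. Qed.

Section CoefficientEvaluation.

Variables (n : nat) (psi : state n.+1).

Definition coef_eval (k : nat) (c : seq int) : algC :=
  (\sum_(j < n.+1 + n.+1) (nth 0 c j)%:~R * nth 0 ((amplitudes psi).1 ++ (amplitudes psi).2) j)
  / sqrtC 2 ^+ k.

Lemma coef_eval_add k c e :
  coef_eval k.+1 (coef_add (n.+1 + n.+1) c e) = (coef_eval k c + coef_eval k e) / sqrtC 2.
Proof.
rewrite /coef_eval /coef_add; under eq_bigr do rewrite nth_mkseq // intrD mulrDl.
rewrite big_split exprSr /=; have := sqrtC2_neq0; move: (sqrtC 2) => s s_neq0.
by field; rewrite s_neq0 expf_neq0.
Qed.

Lemma coef_eval_sub k c e :
  coef_eval k.+1 (coef_sub (n.+1 + n.+1) c e) = (coef_eval k c - coef_eval k e) / sqrtC 2.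
Proof.
rewrite /coef_eval /coef_sub; under eq_bigr do rewrite nth_mkseq // intrB mulrBl.
rewrite sumrB exprSr /=; have := sqrtC2_neq0; move: (sqrtC 2) => s s_neq0.
by field; rewrite s_neq0 expf_neq0.
Qed.

Lemma coef_eval_nil k : coef_eval k [::] = 0.
Proof. by rewrite /coef_eval big1 ?mul0r // => j _; rewrite nth_nil mul0r. Qed.

Lemma coef_eval_unit k c x : (x < n.+1 + n.+1)%N ->
  coef_eval k (mkseq (fun j => (j == x)%:R * c) (n.+1 + n.+1))
  = c%:~R * nth 0 ((amplitudes psi).1 ++ (amplitudes psi).2) x / sqrtC 2 ^+ k.
Proof.
move=> lt_x; rewrite /coef_eval (bigD1 (Ordinal lt_x)) //= nth_mkseq // eqxx mul1r.
rewrite big1 ?addr0 // => j neq_j; rewrite nth_mkseq //.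
suff /negbTE -> : nat_of_ord j != x by rewrite !mul0r.
by apply: contra neq_j => /eqP eq_j; apply/eqP/val_inj.
Qed.

Lemma coef_eval_scalar k (c : int) : c%:~R = sqrtC 2 ^+ k :> algC ->
  map_pair (coef_eval k) (coef_scalar n.+1 c) = amplitudes psi.
Proof.
move=> c_eq; have sk_neq0 : sqrtC 2 ^+ k != 0 :> algC by rewrite expf_neq0 // sqrtC2_neq0.
rewrite map_pair_mkseq; congr pair; apply: (@eq_from_nth _ 0); rewrite ?size_mkseq // => y lt_y;
  rewrite !nth_mkseq //=.
- rewrite coef_eval_unit ?ltn_addr // nth_cat size_mkseq lt_y.
  by rewrite nth_mkseq // c_eq mulrC mulKf.
- rewrite coef_eval_unit ?ltn_add2l // nth_cat size_mkseq ltnNge leq_addr /= addKn.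
  by rewrite nth_mkseq // c_eq mulrC mulKf.
Qed.

Lemma coef_eval_iter k :
  map_pair (coef_eval k) (iter k (coef_step n.+1) (coef_scalar n.+1 1))
  = iter k (hadamard_step n.+1) (amplitudes psi).
Proof.
elim: k => [|k IH]; first by rewrite coef_eval_scalar ?expr0.
rewrite !iterS -IH; apply: walk_step_map.
- exact: coef_eval_add.
- exact: coef_eval_sub.
- exact: coef_eval_nil.
Qed.

End CoefficientEvaluation.

Lemma coef_power_scalar_pow_is_id n k :
  coef_power_scalar n.+1 k.*2 (2 ^ k)%N -> pow_is_id n.+1 k.*2.
Proof.
move=> /eqP iter_scalar psi; apply: amplitudes_inj.
have iter_amplitudes m :
    amplitudes (iter m (@UHF n.+1) psi) = iter m (hadamard_step n.+1) (amplitudes psi).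
  by elim: m => [|m IH] //=; rewrite amplitudes_UHF IH.
rewrite iter_amplitudes -coef_eval_iter iter_scalar coef_eval_scalar //.
by rewrite sqrtC2_expr_double -natrX.
Qed.

Lemma UHF_scale N (a : algC) (psi : state N) :
  UHF [ffun p => a * psi p] = [ffun p => a * UHF psi p].
Proof. by apply/ffunP => -[x []]; rewrite /UHF /shift /coinHF !ffunE /=; ring. Qed.

Lemma iter_UHF_eigenvector N (psi : state N) (l : algC) k :
  UHF psi = [ffun p => l * psi p] -> iter k (@UHF N) psi = [ffun p => l ^+ k * psi p].
Proof.
move=> eigen; elim: k => [|k IH]; first by apply/ffunP => p; rewrite ffunE mul1r.
rewrite iterS IH UHF_scale eigen; apply/ffunP => p; rewrite !ffunE.
by rewrite exprSr mulrA.
Qed.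

(* [U] maps the plane of waves [w^x (a, b)] to itself, with trace [(w + w') / sqrt 2]
   and determinant [1] there ([w'] is [w^-1]); [plane_wave] is the eigenvector for
   a root [l] of the characteristic polynomial. *)
Section PlaneWave.

Variables (n : nat) (w w' l : algC).
Hypotheses (w_root : w ^+ n.+1 = 1) (w_inv : w * w' = 1)
  (l_root : l ^+ 2 - (w + w') / sqrtC 2 * l + 1 = 0).

Definition plane_wave : state n.+1 :=
  [ffun p : 'I_n.+1 * bool => w ^+ p.1 * (if p.2 then w / sqrtC 2 - l else w / sqrtC 2)].

Lemma UHF_plane_wave : UHF plane_wave = [ffun p => l * plane_wave p].
Proof.
have expr_ordS (x : 'I_n.+1) : w ^+ ordS x = w ^+ x * w by rewrite /= expr_mod // exprSr.
have expr_ord_pred (x : 'I_n.+1) : w ^+ ord_pred x * w = w ^+ x.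
  by rewrite /= expr_mod // -exprSr addnS /= -addnS exprD w_root mulr1.
have s_neq0 := sqrtC2_neq0.
apply/ffunP => -[x []]; rewrite /UHF /shift /coinHF !ffunE /=.
- rewrite -(expr_ord_pred x); move: (w ^+ ord_pred x) => W.
  apply/eqP; rewrite -subr_eq0; apply/eqP.
  have -> : (W * (w / sqrtC 2) + W * (w / sqrtC 2 - l)) / sqrtC 2
            - l * (W * w * (w / sqrtC 2 - l))
      = W * w * (l ^+ 2 - (w + w') / sqrtC 2 * l + 1)
        + W * w * (2 - sqrtC 2 ^+ 2) / sqrtC 2 ^+ 2 + W * l * (w * w' - 1) / sqrtC 2.
    by field.
  by rewrite l_root sqrtCK w_inv !subrr !mulr0 !mul0r !addr0.
- by rewrite expr_ordS; field.
Qed.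

Lemma pow_is_id_eigenvalue m : pow_is_id n.+1 m -> l ^+ m = 1.
Proof.
move=> /(_ plane_wave); rewrite (iter_UHF_eigenvector _ UHF_plane_wave).
move/ffunP/(_ (ord0, false)); rewrite !ffunE /= expr0 mul1r -[X in _ = X]mul1r.
apply: mulIf; rewrite mulf_neq0 ?invr_eq0 ?sqrtC2_neq0 //.
by rewrite -unitfE; apply/unitrPr; exists w'.
Qed.

End PlaneWave.

Lemma root1_neq0 (R : idomainType) k (x : R) : x ^+ k.+1 = 1 -> x != 0.
Proof. by apply: contra_eq_neq => ->; rewrite expr0n /= eq_sym oner_eq0. Qed.

Definition half_sqr_traces_Aint N :=
  forall w : algC, w ^+ N = 1 -> (w + w^-1) ^+ 2 / 2 \in Aint.

Lemma pow_is_id_half_sqr_traces_Aint n m :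
  (0 < m)%N -> pow_is_id n.+1 m -> half_sqr_traces_Aint n.+1.
Proof.
move=> m_gt0 id_m w w_root; have w_inv : w * w^-1 = 1 by rewrite mulfV ?(root1_neq0 w_root).
pose c := (w + w^-1) / sqrtC 2; pose r := sqrtC (c ^+ 2 - 4); pose l := (c + r) / 2.
have l_root : l ^+ 2 - c * l + 1 = 0.
  have -> : l ^+ 2 - c * l + 1 = (r ^+ 2 - (c ^+ 2 - 4)) / 4 by rewrite /l; field.
  by rewrite sqrtCK subrr mul0r.
have l_m : l ^+ m = 1 := pow_is_id_eigenvalue w_root w_inv l_root id_m.
have l_neq0 : l != 0 by rewrite -(prednK m_gt0) in l_m; apply: root1_neq0 l_m.
have l_Aint : l \in Aint by apply: (Aint_unity_root m_gt0); rewrite unity_rootE l_m.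
have l_inv : l^-1 = l ^+ m.-1 by apply: (mulfI l_neq0); rewrite mulfV // -exprS prednK.
have c_eq : c = l + l^-1.
  have c_l : c * l = l ^+ 2 + 1 by rewrite -[LHS]addr0 -l_root; ring.
  by apply: (mulIf l_neq0); rewrite c_l mulrDl mulVf // expr2.
have -> : (w + w^-1) ^+ 2 / 2 = c ^+ 2 by rewrite expr_div_n sqrtCK.
by rewrite c_eq l_inv rpredX ?rpredD ?rpredX.
Qed.

Lemma inv_pow2_notAint k : (0 < k)%N -> (2 ^+ k : algC)^-1 \notin Aint.
Proof.
move=> k_gt0; apply/negP => inv_Aint.
have inv_int : (2 ^+ k : algC)^-1 \is a Num.int.
  by apply: Cint_rat_Aint; rewrite // rpredV rpredX ?rpred_nat.
have := norm_intr_ge1 inv_int; rewrite invr_eq0 expf_eq0 pnatr_eq0 andbF => /(_ isT).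
rewrite normfV normrX ger0_norm ?ler0n // invf_ge1 ?exprn_gt0 ?ltr0n //.
by rewrite -natrX -[1]/(1%:R) ler_nat leqNgt (ltn_exp2l 0 k) // k_gt0.
Qed.

Lemma prod_one_add_prim_root (F : fieldType) d (z : F) :
  odd d -> d.-primitive_root z -> \prod_(0 <= j < d) (1 + z ^+ j) = 2.
Proof.
move=> d_odd prim_z; have := congr1 (horner^~ (-1)) (factor_Xn_sub_1 prim_z).
rewrite horner_prod /= !hornerE -signr_odd d_odd expr1.
under eq_bigr do rewrite hornerXsubC.
have -> : \prod_(0 <= j < d) (1 + z ^+ j) = \prod_(0 <= j < d) (-1 * (-1 - z ^+ j)).
  by apply: eq_bigr => j _; ring.
by rewrite big_split /= prodr_const_nat subn0 -signr_odd d_odd expr1 => ->; ring.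
Qed.

(* With [y ^+ 2 = z], each factor equals [z^-j (1 + z^j)^2 / 2], and the [z^-j]
   multiply to [z^-(d (d - 1) / 2) = 1] since [d] is odd. *)
Lemma prod_half_sqr_traces (F : numFieldType) d (z y : F) :
    odd d -> d.-primitive_root z -> y ^+ 2 = z ->
  \prod_(0 <= j < d) ((y ^+ j + (y ^+ j)^-1) ^+ 2 / 2) = 2 ^+ 2 / 2 ^+ d.
Proof.
move=> d_odd prim_z y_sqr; have z_d := prim_expr_order prim_z.
have z_neq0 : z != 0 by apply: (@root1_neq0 _ d.-1); rewrite prednK ?odd_gt0.
have y_neq0 : y != 0 by apply: contra_neq z_neq0 => y0; rewrite -y_sqr y0 expr0n.
have factorE j : (y ^+ j + (y ^+ j)^-1) ^+ 2 / 2 = (z ^+ j)^-1 * (1 + z ^+ j) ^+ 2 * 2^-1.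
  rewrite -y_sqr exprAC; have : y ^+ j != 0 by rewrite expf_neq0.
  by move: (y ^+ j) => t t_neq0; field.
under eq_bigr do rewrite factorE.
rewrite !big_split /= prodr_const_nat subn0 prodfV prodrXr bin2_sum bin2odd //.
rewrite exprM z_d expr1n invr1 mul1r prod_one_add_prim_root //.
by rewrite exprVn expr2.
Qed.

(* [y = z^((d + 1) / 2)] is a square root of a primitive [d]-th root [z]. *)
Lemma odd_dvd_half_sqr_traces_notAint N d :
  odd d -> (3 <= d)%N -> (d %| N)%N -> ~ half_sqr_traces_Aint N.
Proof.
move=> d_odd d_ge3 d_dvd_N traces_Aint.
have [z prim_z] := C_prim_root_exists (odd_gt0 d_odd).
pose y := z ^+ d.+1./2.
have y_sqr : y ^+ 2 = z.
  by rewrite -exprM muln2 halfK /= d_odd subn0 exprS prim_expr_order // mulr1.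
have y_root j : (y ^+ j) ^+ N = 1.
  apply/eqP; rewrite -!exprM -(prim_order_dvd prim_z).
  by rewrite dvdn_mull // dvdn_mull.
have : \prod_(0 <= j < d) ((y ^+ j + (y ^+ j)^-1) ^+ 2 / 2) \in Aint.
  by apply: rpred_prod => j _; apply: traces_Aint.
rewrite (prod_half_sqr_traces d_odd prim_z y_sqr).
have -> : 2 ^+ 2 / 2 ^+ d = (2 ^+ (d - 2) : algC)^-1.
  rewrite -[in 2 ^+ d](subnK (ltnW d_ge3)) exprD invfM mulrCA divff ?mulr1 //.
  by rewrite expf_neq0 ?pnatr_eq0.
by apply/negP/inv_pow2_notAint; rewrite subn_gt0.
Qed.

Lemma dvd16_half_sqr_traces_notAint N : (16 %| N)%N -> ~ half_sqr_traces_Aint N.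
Proof.
move=> dvd16_N traces_Aint.
have [z prim_z] := C_prim_root_exists (isT : (0 < 16)%N).
have z_16 : z ^+ 16 = 1 := prim_expr_order prim_z.
have z_N : z ^+ N = 1 by apply/eqP; rewrite -(prim_order_dvd prim_z).
have z_neq0 : z != 0 by apply: (@root1_neq0 _ 15).
have z8 : z ^+ 8 + 1 = 0.
  have z8_neq1 : z ^+ 8 != 1 by rewrite -(prim_order_dvd prim_z).
  have : (z ^+ 8 - 1) * (z ^+ 8 + 1) = 0 by rewrite -subr_sqr -exprM z_16 expr1n subrr.
  by move/eqP; rewrite mulf_eq0 subr_eq0 (negbTE z8_neq1) => /eqP.
have := rpredM (traces_Aint z z_N) (traces_Aint (z ^+ 3) _).
rewrite exprAC z_N expr1n => /(_ erefl).
have -> : (z + z^-1) ^+ 2 / 2 * ((z ^+ 3 + (z ^+ 3)^-1) ^+ 2 / 2)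
    = (2 ^+ 1)^-1 + (z ^+ 8 + 1) * (z ^+ 8 + 1 + 2 * (z ^+ 6 + z ^+ 2) + z ^+ 4) / (4 * z ^+ 8).
  by field; rewrite ?expf_neq0 ?z_neq0 ?pnatr_eq0.
by rewrite z8 !mul0r addr0; apply/negP/inv_pow2_notAint.
Qed.

Lemma half_sqr_traces_Aint_dvd8 N : (0 < N)%N -> half_sqr_traces_Aint N -> (N %| 8)%N.
Proof.
move=> N_gt0 traces_Aint.
have [d d_coprime N_eq] := pfactor_coprime (isT : prime 2) N_gt0.
have [d_eq1|d_neq1] := eqVneq d 1%N; last first.
  have d_odd : odd d by rewrite -coprimen2 coprime_sym.
  case: (odd_dvd_half_sqr_traces_notAint d_odd _ _ traces_Aint); last by rewrite N_eq dvdn_mulr.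
  by case: d d_odd d_neq1 {d_coprime N_eq} => [|[|[|d]]].
rewrite N_eq d_eq1 mul1n in traces_Aint *.
have [log_ge4|log_le3] := leqP 4 (logn 2 N).
  by case: (dvd16_half_sqr_traces_notAint (dvdn_exp2l 2 log_ge4) traces_Aint).
exact: (@dvdn_exp2l 2 _ 3).
Qed.

Definition zeta8 : algC := (1 + 'i) / sqrtC 2.

Lemma zeta8_sqr : zeta8 ^+ 2 = 'i.
Proof.
have -> : zeta8 ^+ 2 = ('i ^+ 2 + 1 + 2 * 'i) / sqrtC 2 ^+ 2.
  by rewrite /zeta8; field; rewrite sqrtC2_neq0.
by rewrite sqrCi sqrtCK; field.
Qed.

Lemma prim_root_zeta8 : 8.-primitive_root zeta8.
Proof.
have zeta8_4 : zeta8 ^+ 4 = -1 by rewrite -[4%N]/(2 * 2)%N exprM zeta8_sqr sqrCi.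
have zeta8_8 : zeta8 ^+ 8 = 1 by rewrite -[8%N]/(4 * 2)%N exprM zeta8_4 sqrrN expr1n.
have [k prim_k k_dvd8] := prim_order_exists (isT : (0 < 8)%N) zeta8_8.
have k_ndvd4 : ~~ (k %| 4)%N.
  by rewrite (prim_order_dvd prim_k) zeta8_4 -subr_eq0 -opprD oppr_eq0 -mulr2n pnatr_eq0.
suff k_eq8 : k = 8%N by rewrite -k_eq8.
by move: k_dvd8 k_ndvd4; rewrite dvdn_divisors // !inE => /or4P [] /eqP ->.
Qed.

(* [w = 1] gives the eigenvalue [zeta8]. *)
Lemma pow_is_id_dvd8 n m : pow_is_id n.+1 m -> (8 %| m)%N.
Proof.
move=> id_m; rewrite (prim_order_dvd prim_root_zeta8); apply/eqP.
apply: (pow_is_id_eigenvalue (expr1n _ _) (mulr1 1) _ id_m).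
have -> : (1 + 1) / sqrtC 2 * zeta8 = (1 + 'i) * (2 / sqrtC 2 ^+ 2).
  by rewrite /zeta8; field; rewrite sqrtC2_neq0.
by rewrite zeta8_sqr sqrtCK divff ?pnatr_eq0 // mulr1; ring.
Qed.

(* On [C_8], [w = - zeta8] gives a primitive cube root of unity as eigenvalue. *)
Lemma pow_is_id8_dvd3 m : pow_is_id 8 m -> (3 %| m)%N.
Proof.
move=> id_m; have [q prim_q] := C_prim_root_exists (isT : (0 < 3)%N).
rewrite (prim_order_dvd prim_q); apply/eqP.
have q_root : q ^+ 2 + q + 1 = 0.
  have q_neq1 : q != 1 by move: (prim_order_dvd prim_q 1); rewrite expr1 => <-.
  have : (q - 1) * (q ^+ 2 + q + 1) = 0.
    by rewrite -(subrr (q ^+ 3)) {2}(prim_expr_order prim_q); ring.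
  by move/eqP; rewrite mulf_eq0 subr_eq0 (negbTE q_neq1) => /eqP.
have s_neq0 := sqrtC2_neq0.
apply: (pow_is_id_eigenvalue (n := 7) (w := - zeta8) (w' := - ((1 - 'i) / sqrtC 2)) _ _ _ id_m).
- by rewrite -[8%N]/(2 * 4)%N exprM sqrrN zeta8_sqr -[4%N]/(2 * 2)%N exprM sqrCi sqrrN expr1n.
- have -> : - zeta8 * - ((1 - 'i) / sqrtC 2) = (1 - 'i ^+ 2) / sqrtC 2 ^+ 2.
    by rewrite /zeta8; field.
  by rewrite sqrCi sqrtCK; field.
- have -> : (- zeta8 - (1 - 'i) / sqrtC 2) / sqrtC 2 = - (2 / sqrtC 2 ^+ 2).
    by rewrite /zeta8; field.
  by rewrite sqrtCK divff ?pnatr_eq0 // mulN1r opprK.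
Qed.

Lemma period_is_Some N T : (0 < T)%N -> pow_is_id N T ->
  (forall m, (0 < m)%N -> pow_is_id N m -> (T %| m)%N) -> period_is N (Some T).
Proof.
move=> T_gt0 id_T T_dvd; do 2!split=> //.
by move=> m /andP [m_gt0]; rewrite ltnNge => /negP + /(T_dvd m m_gt0) /(dvdn_leq m_gt0).
Qed.

Local Close Scope ring_scope.

Theorem theorem5p2 (N : nat) (hN : (2 <= N)%N) :
  period_is N (if N == 2 then Some 8
               else if N == 4 then Some 8
               else if N == 8 then Some 24
               else None).
Proof.
case: N hN => [|n] // hN.
have [N2|N2] := eqVneq n.+1 2%N.
  rewrite N2; apply: period_is_Some => // [|m _ /pow_is_id_dvd8 //].
  by apply: (coef_power_scalar_pow_is_id (k := 4)); vm_compute.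
have [N4|N4] := eqVneq n.+1 4%N.
  rewrite N4; apply: period_is_Some => // [|m _ /pow_is_id_dvd8 //].
  by apply: (coef_power_scalar_pow_is_id (k := 4)); vm_compute.
have [N8|N8] := eqVneq n.+1 8%N.
  rewrite N8; apply: period_is_Some => // [|m _ id_m].
    by apply: (coef_power_scalar_pow_is_id (k := 12)); vm_compute.
  by rewrite -[24%N]/(8 * 3)%N Gauss_dvd // (pow_is_id_dvd8 id_m) (pow_is_id8_dvd3 id_m).
move=> m m_gt0.
move/(pow_is_id_half_sqr_traces_Aint m_gt0)/(half_sqr_traces_Aint_dvd8 (ltn0Sn n)).
rewrite dvdn_divisors // !inE (negbTE N2) (negbTE N4) (negbTE N8) !orbF.
by move=> /eqP[n0]; rewrite n0 in hN.
Qed.
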